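(* For any $\mathbf{z},\mathbf{z}'\in\mathbb{F}_{2^n}^m$ and for $\mathcal{P}=(p_1,\dots,p_m)$ with $p_i\sim\mathcal{P}_i$ independently, where each $\mathcal{P}_i$ is a shift-invariant distribution on $\mathbb{F}_2[X_{i,1},\dots,X_{i,n}]$, $$\mathbb{E}_{\mathcal{P}}\big[|(B*W^{\mathcal{P}})(\mathbf{z})|^2\big]=\mathbb{E}_{\mathcal{P}}\big[|(B*W^{\mathcal{P}})(\mathbf{z}')|^2\big].$$
   Context: Elements of $\mathbb{F}_{2^n}$ are identified with $\mathbb{F}_2^n$ via a fixed basis. For $f:\mathbb{F}_{2^n}^m\to\mathbb{C}$, $\hat f(\mathbf{z})=2^{-nm/2}\sum_{\mathbf{x}}f(\mathbf{x})(-1)^{\mathrm{Tr}(\mathbf{x}\cdot\mathbf{z})}$ (absolute trace). Convolution: $(f*g)(\mathbf{x})=\sum_{\mathbf{y}}f(\mathbf{y})g(\mathbf{x}-\mathbf{y})$. With $\mathcal{R}_i$ the roots of $p_i$ in $\mathbb{F}_2^n$, $\mathcal{R}=\prod_i\mathcal{R}_i$, $W^{\mathcal{P}}(\mathbf{e})=|\mathcal{R}|^{-1/2}$ if $\mathbf{e}\in\mathcal{R}$ and $0$ otherwise. $B:\mathbb{F}_{2^n}^m\to\mathbb{C}$ is the function whose transform $\hat B$ is the indicator of the set $\mathcal{B}=\{\mathbf{e}:\exists\mathbf{x}\in C^\perp,\ \mathsf{Decode}(\mathbf{x}+\mathbf{e})\neq\mathbf{x}\}$, where $C^\perp$ is a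 Reed–Solomon code over $\mathbb{F}_{2^n}$ of length $m$ and $\mathsf{Decode}$ is a fixed decoding map $\mathbb{F}_{2^n}^m\to C^\perp$. A distribution $\mathcal{P}_i$ is shift-invariant if for every $\mathbf{s}\in\mathbb{F}_2^n$, $p(\mathbf{X}+\mathbf{s})$ with $p\sim\mathcal{P}_i$ is distributed as $\mathcal{P}_i$. *)

From HB Require Import structures.
From mathcomp Require Import all_boot all_order all_algebra all_field.
From mathcomp Require Import all_classical all_reals all_analysis.
From mathcomp Require complex.
From mathcomp Require mpoly.
Import complex.
Import (canonicals) mpoly.
Set Implicit Arguments. Unset Strict Implicit. Unset Printing Implicit Defensive.
Import Order.TTheory GRing.Theory Num.Theory.
Local Open Scope ring_scope.

Section Defs.
Variable R : realType.
Local Notation C := (complex R).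
Variables (F : finFieldType) (n m : nat).

Local Notation vec := {ffun 'I_m -> F}.
Local Notation F2n := {ffun 'I_n -> 'F_2}.
Local Notation poly2 := (mpoly.mpoly n 'F_2).

(* absolute trace F_{2^n} -> F_2 (as an element of F) *)
Definition absTr (x : F) : F := \sum_(i < n) x ^+ (2 ^ i).
Definition dotv (x z : vec) : F := \sum_(i < m) x i * z i.
Definition chi (x : F) : C := if absTr x == 0 then 1 else -1.

Definition fourier (f : vec -> C) (z : vec) : C :=
  (sqrtC ((2 ^ (n * m))%:R))^-1 * \sum_(x : vec) f x * chi (dotv x z).

Definition convol (f g : vec -> C) (x : vec) : C := \sum_(y : vec) f y * g (x - y).

Definition inRS (k : nat) (alpha : 'I_m -> F) (x : vec) : Prop :=
  exists p : {poly F}, (size p <= k)%N /\ forall i, x i = p.[alpha i].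

(* indicator of the set  {e : exists x in C^perp, Decode (x+e) <> x} *)
Definition indB (k : nat) (alpha : 'I_m -> F) (Decode : vec -> vec) (e : vec) : C :=
  if `[< exists x, inRS k alpha x /\ Decode (x + e) <> x >] then 1 else 0.

Variable phi : F -> F2n. (* coordinates w.r.t. the fixed basis *)

(* the set R = prod_i R_i, R_i the roots of p_i, read in F_{2^n}^m via phi *)
Definition rootSet (P : {ffun 'I_m -> poly2}) : {set vec} :=
  [set e : vec | [forall i, mpoly.meval (phi (e i)) (P i) == 0]].

Definition WP (P : {ffun 'I_m -> poly2}) (e : vec) : C :=
  if e \in rootSet P then (sqrtC (#|rootSet P|%:R))^-1 else 0.

Definition shiftp (s : F2n) (p : poly2) : poly2 :=
  mpoly.comp_mpoly [tuple (@mpoly.mpolyX n 'F_2 (@mpoly.mnm1 n j) + @mpoly.mpolyC n _ (s j) : poly2) | j < n] p.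

(* a probability distribution on F_2[X_1..X_n] (discrete: the space is countable) *)
Definition is_distr (mu : poly2 -> R) : Prop :=
  (forall p, 0 <= mu p) /\ (\esum_(p in [set: poly2]) (mu p)%:E = 1)%E.

Definition shift_invariant (mu : poly2 -> R) : Prop :=
  forall (s : F2n) (q : poly2),
    (\esum_(p in [set p | shiftp s p = q]) (mu p)%:E = (mu q)%:E)%E.

(* expectation over P = (p_1,...,p_m), p_i ~ mu i independently *)
Definition expect (mu : 'I_m -> poly2 -> R) (g : {ffun 'I_m -> poly2} -> R) : \bar R :=
  (\esum_(P in [set: {ffun 'I_m -> poly2}]) ((\prod_(i < m) mu i (P i)) * g P)%:E)%E.

Definition sqnorm (c : C) : R := complex.Re c ^+ 2 + complex.Im c ^+ 2.

End Defs.

From HB Require Import structures.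
From mathcomp Require Import all_boot all_order all_algebra all_field.
From mathcomp Require Import all_classical all_reals all_analysis.
From mathcomp Require complex.
From mathcomp Require mpoly.
Import complex.
Import (canonicals) mpoly.
Set Implicit Arguments. Unset Strict Implicit. Unset Printing Implicit Defensive.
Import Order.TTheory GRing.Theory Num.Theory.
Local Open Scope ring_scope.

(* Let t := z' - z.  Shifting each p_i by the coordinates of t_i translates the
   root set by -t, so the shifted family has weight e |-> W^P (e + t) and its
   convolution with B at z equals (B * W^P)(z').  In characteristic 2 the shift
   is an involution, and each P_i is shift-invariant, so shifting the whole
   family is a measure-preserving bijection: the two expectations are
   reindexings of each other.  No property of B is needed. *)

Lemma comp_mpolyA (n k l : nat) (R : comNzRingType) (p : mpoly.mpoly n R)
    (lq : n.-tuple (mpoly.mpoly k R)) (lr : k.-tuple (mpoly.mpoly l R)) :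
  mpoly.comp_mpoly lr (mpoly.comp_mpoly lq p) =
  mpoly.comp_mpoly [tuple mpoly.comp_mpoly lr (tnth lq i) | i < n] p.
Proof.
rewrite (mpoly.comp_mpolyE p lq) (mpoly.comp_mpolyE p) raddf_sum /=.
apply: eq_bigr => mon _; rewrite mpoly.comp_mpolyZ rmorph_prod /=.
congr (_ *: _); apply: eq_bigr => i _.
by rewrite rmorphXn /= tnth_map tnth_ord_tuple.
Qed.

Section ShiftPoly.
Variable n : nat.
Implicit Types (s v : {ffun 'I_n -> 'F_2}) (p : mpoly.mpoly n 'F_2).

Lemma shiftpK s : involutive (shiftp s).
Proof.
move=> p; rewrite /shiftp comp_mpolyA; set lX := [tuple _ | i < n].
have -> : lX = [tuple mpoly.mpolyX 'F_2 (mpoly.mnm1 i) | i < n].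
  apply: eq_from_tnth => i; rewrite /lX !tnth_map !tnth_ord_tuple.
  rewrite mpoly.comp_mpolyD mpoly.comp_mpolyC mpoly.comp_mpolyXU -tnth_nth.
  rewrite tnth_map tnth_ord_tuple -addrA -raddfD /=.
  by rewrite addrr_pchar2 ?pchar_Fp // raddf0 addr0.
exact: mpoly.comp_mpoly_id.
Qed.

Lemma meval_shiftp v s p : mpoly.meval v (shiftp s p) = mpoly.meval (v + s) p.
Proof.
rewrite /shiftp mpoly.comp_mpoly_meval; apply: mpoly.meval_eq => i.
by rewrite tnth_map tnth_ord_tuple mpoly.mevalD mpoly.mevalXU mpoly.mevalC ffunE.
Qed.

Lemma shift_invariantE (R : realType) (mu : mpoly.mpoly n 'F_2 -> R) :
  (forall p, 0 <= mu p) -> shift_invariant mu -> forall s p, mu (shiftp s p) = mu p.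
Proof.
move=> mu_ge0 mu_shift s p; have := mu_shift s (shiftp s p).
have -> : [set q | shiftp s q = shiftp s p]%classic = [set p]%classic.
  apply/seteqP; split => q /=; last by move->.
  by move/(can_inj (shiftpK s)).
by rewrite esum_set1 ?lee_fin // => -[].
Qed.

End ShiftPoly.

Definition shift_family n m (s : 'I_m -> {ffun 'I_n -> 'F_2})
    (P : {ffun 'I_m -> mpoly.mpoly n 'F_2}) : {ffun 'I_m -> mpoly.mpoly n 'F_2} :=
  [ffun i => shiftp (s i) (P i)].

Lemma shift_familyK n m (s : 'I_m -> {ffun 'I_n -> 'F_2}) :
  involutive (shift_family s).
Proof. by move=> P; apply/ffunP => i; rewrite !ffunE shiftpK. Qed.

Lemma expect_shift_family (R : realType) n m (mu : 'I_m -> mpoly.mpoly n 'F_2 -> R)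
    (mu_ge0 : forall i p, 0 <= mu i p) (mu_shift : forall i, shift_invariant (mu i))
    (s : 'I_m -> {ffun 'I_n -> 'F_2}) (h : {ffun 'I_m -> mpoly.mpoly n 'F_2} -> R) :
  expect mu (fun P => h (shift_family s P)) = expect mu h.
Proof.
rewrite /expect [RHS](@reindex_esum _ _ _ setT setT (shift_family s)).
  apply: eq_esum => P _ /=; congr ((_ * _)%:E).
  by apply: eq_bigr => i _; rewrite ffunE shift_invariantE.
split; first by [].
- by move=> P Q _ _; apply: (can_inj (shift_familyK s)).
- by move=> Q _; exists (shift_family s Q); rewrite ?shift_familyK.
Qed.

Section TranslateWeights.
Variables (R : realType) (F : finFieldType) (n m : nat).
Variable phi : F -> {ffun 'I_n -> 'F_2}.
Hypothesis phi_add : {morph phi : x y / x + y}.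
Implicit Types (t e : {ffun 'I_m -> F}) (P : {ffun 'I_m -> mpoly.mpoly n 'F_2}).

Lemma rootSet_shift_family t P :
  rootSet phi (shift_family (phi \o t) P) = (fun e => e + t) @^-1: rootSet phi P.
Proof.
apply/setP => e; rewrite !inE; apply: eq_forallb => i.
by rewrite ffunE meval_shiftp /= -phi_add ffunE.
Qed.

Lemma WP_shift_family t P e :
  WP R phi (shift_family (phi \o t) P) e = WP R phi P (e + t).
Proof.
have card_shift : #|rootSet phi (shift_family (phi \o t) P)| = #|rootSet phi P|.
  by rewrite rootSet_shift_family card_preimset //; apply: addIr.
by rewrite /WP card_shift rootSet_shift_family inE.
Qed.

End TranslateWeights.

Lemma convol_translate (R : realType) (F : finFieldType) m
    (f g : {ffun 'I_m -> F} -> complex R) (t z : {ffun 'I_m -> F}) :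
  convol f (fun e => g (e + t)) z = convol f g (z + t).
Proof. by apply: eq_bigr => y _; rewrite addrAC. Qed.

Theorem mainTheorem4 (R : realType) (F : finFieldType) (n m : nat)
  (charF : 2%N \in [pchar F]) (cardF : #|F| = (2 ^ n)%N)
  (phi : F -> {ffun 'I_n -> 'F_2})
  (phi_add : {morph phi : x y / x + y}) (phi_bij : bijective phi)
  (k : nat) (alpha : 'I_m -> F) (alpha_inj : injective alpha)
  (Decode : {ffun 'I_m -> F} -> {ffun 'I_m -> F})
  (Decode_code : forall y, inRS k alpha (Decode y))
  (B : {ffun 'I_m -> F} -> complex R)
  (hB : forall e, fourier n B e = indB R k alpha Decode e)
  (mu : 'I_m -> mpoly.mpoly n 'F_2 -> R)
  (mu_distr : forall i, is_distr (mu i))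
  (mu_shift : forall i, shift_invariant (mu i))
  (z z' : {ffun 'I_m -> F}) :
  expect mu (fun P => sqnorm (convol B (WP R phi P) z)) =
  expect mu (fun P => sqnorm (convol B (WP R phi P) z')).
Proof.
pose t := z' - z.
have mu_ge0 i p : 0 <= mu i p by have [] := mu_distr i.
have shifted_convol P :
    convol B (WP R phi (shift_family (phi \o t) P)) z = convol B (WP R phi P) z'.
  rewrite (funext (WP_shift_family R phi_add t P)) convol_translate.
  by rewrite /t addrC subrK.
rewrite -(expect_shift_family mu_ge0 mu_shift (phi \o t)
            (fun P => sqnorm (convol B (WP R phi P) z))).
by apply: congr1; apply: funext => P; rewrite shifted_convol.
Qed.
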